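(* Let $p\ge2$ and let $n\ge1$ be a natural number whose tribonacci Zeckendorf representation is $[n]=\varepsilon_p\varepsilon_{p-1}\cdots\varepsilon_2$ with $\varepsilon_p=1$. Then for every word $u\in(\tau^{p-1}(c))^{\varepsilon_p}(\tau^{p-2}(c))^{\varepsilon_{p-1}}\cdots(\tau(c))^{\varepsilon_2}$, at least one of the words in $u\,\mathcal{S}_\tau$ is a prefix of some word in $\tau^p(a)$, where $\mathcal{S}_\tau=\{ab,ba,ac,ca\}$.
   Context: Tribonacci numbers: $t_0=0$, $t_1=t_2=1$, $t_n=t_{n-1}+t_{n-2}+t_{n-3}$ for $n\ge3$. Every positive integer $n$ has a unique representation $n=\sum_{i=2}^r\varepsilon_it_i$ with $\varepsilon_i\in\{0,1\}$, $\varepsilon_r=1$ and $\varepsilon_i\varepsilon_{i+1}\varepsilon_{i+2}=0$; write $[n]=\varepsilon_r\cdots\varepsilon_2$. The random tribonacci substitution is $\tau\colon a\mapsto\{ab,ba\},\ b\mapsto\{ac,ca\},\ c\mapsto\{a\}$, extended to words by set concatenation and to sets by unions; $\tau^p$ is its $p$-fold iterate. For a set $A$ of words, $A^0=\{\text{empty word}\}$, $A^k$ the $k$-fold set concatenation. Note all words in $\tau^{i-1}(c)$ have length $t_i$. *)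

From mathcomp Require Import all_boot.
Set Implicit Arguments. Unset Strict Implicit. Unset Printing Implicit Defensive.

Fixpoint trib (n : nat) : nat :=
  match n with
  | 0 => 0
  | m.+1 =>
      match m with
      | 0 => 1
      | l.+1 =>
          match l with
          | 0 => 1
          | k.+1 => trib m + trib l + trib k
          end
      end
  end.

Inductive letter := la | lb | lc.
Definition word := seq letter.

Definition wset := word -> Prop.

Definition tau_letter (x : letter) : wset :=
  match x with
  | la => fun w => w = [:: la; lb] \/ w = [:: lb; la]
  | lb => fun w => w = [:: la; lc] \/ w = [:: lc; la]
  | lc => fun w => w = [:: la]
  end.

Definition cat_set (A B : wset) : wset :=
  fun w => exists u v, w = u ++ v /\ A u /\ B v.

Fixpoint tau_word (u : word) : wset :=
  match u with
  | [::] => fun w => w = [::]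
  | x :: u' => cat_set (tau_letter x) (tau_word u')
  end.

Definition tau_set (A : wset) : wset :=
  fun w => exists u, A u /\ tau_word u w.

Definition tau_iter (p : nat) (A : wset) : wset := iter p tau_set A.

Definition tau_pow (p : nat) (x : letter) : wset := tau_iter p (fun w => w = [:: x]).

Fixpoint pow_set (A : wset) (k : nat) : wset :=
  match k with
  | 0 => fun w => w = [::]
  | k'.+1 => cat_set A (pow_set A k')
  end.

(* zeck_prod eps i =
   (tau^{i-1}(c))^{eps_i} (tau^{i-2}(c))^{eps_{i-1}} ... (tau(c))^{eps_2}
   (empty product {empty word} for i < 2). *)
Fixpoint zeck_prod (eps : nat -> bool) (i : nat) : wset :=
  match i with
  | 0 => fun w => w = [::]
  | j.+1 =>
      match j with
      | 0 => fun w => w = [::]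
      | _ => cat_set (pow_set (tau_pow j lc) (eps j.+1)) (zeck_prod eps j)
      end
  end.

Definition is_trib_zeck (n p : nat) (eps : nat -> bool) : Prop :=
  eps p = true /\
  (forall i, 2 <= i -> i.+2 <= p -> ~~ [&& eps i, eps i.+1 & eps i.+2]) /\
  n = \sum_(2 <= i < p.+1) (eps i : nat) * trib i.

Definition S_tau : wset :=
  fun s => s = [:: la; lb] \/ s = [:: lb; la] \/ s = [:: la; lc] \/ s = [:: lc; la].

Definition is_prefix (u w : word) : Prop := exists v, w = u ++ v.

From mathcomp Require Import all_boot.
Set Implicit Arguments. Unset Strict Implicit. Unset Printing Implicit Defensive.

(* Call u extendable in a set A of words if u ++ r lies in A for a tail r that
   either begins with a word of S_tau or is a single letter.  For k >= 1 the sets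
   tau^k(b) and tau^(k+1)(c) contain words beginning with a as well as words
   beginning with another letter; since tau^(k+1)(a) contains tau^k(a) tau^k(b),
   a word extendable in tau^k(a) is then followed by an S_tau-word inside
   tau^(k+1)(a).  Extendability is proved by induction along the digits, using
   tau^(k+1)(c) = tau^k(a), the inclusions tau^k(a) tau^k(b) <= tau^(k+1)(a) and
   tau^k(a) tau^k(c) <= tau^(k+1)(b), and the absence of three consecutive ones:
   a word of the product with digits up to k+1 is extendable in tau^k(a), and
   also in tau^k(b) when the digit k+2 is one. *)

Lemma tau_word_cat u v w1 w2 :
  tau_word u w1 -> tau_word v w2 -> tau_word (u ++ v) (w1 ++ w2).
Proof.
elim: u w1 => [|x u IH] w1 /=; first by move=> ->.
move=> [w11 [w12 [-> [Hx Hu]]]] Hv; exists w11, (w12 ++ w2).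
by rewrite catA; split=> //; split=> //; apply: IH.
Qed.

Lemma tau_iter_cat k (A B : wset) w1 w2 :
  tau_iter k A w1 -> tau_iter k B w2 -> tau_iter k (cat_set A B) (w1 ++ w2).
Proof.
elim: k w1 w2 => [|k IH] w1 w2 /=; first by exists w1, w2.
move=> [u1 [H1 T1]] [u2 [H2 T2]]; exists (u1 ++ u2).
by split; [apply: IH | apply: tau_word_cat].
Qed.

Lemma tau_iter_sub k (A B : wset) :
  (forall w, A w -> B w) -> forall w, tau_iter k A w -> tau_iter k B w.
Proof.
move=> sAB; elim: k => [|k IH] w /=; first exact: sAB.
by move=> [u [Hu Tu]]; exists u; split=> //; apply: IH.
Qed.

Lemma tau_pow_cat_sub k x y z : tau_letter x [:: y; z] ->
  forall w, cat_set (tau_pow k y) (tau_pow k z) w -> tau_pow k.+1 x w.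
Proof.
move=> Hx w [w1 [w2 [-> [H1 H2]]]]; rewrite /tau_pow /tau_iter iterSr.
apply: (tau_iter_sub (A := cat_set (fun w => w = [:: y]) (fun w => w = [:: z]))).
  by move=> _ [_ [_ [-> [-> ->]]]]; exists [:: x]; split=> //; exists [:: y; z], [::].
exact: tau_iter_cat.
Qed.

Lemma tau_powSc k w : tau_pow k.+1 lc w <-> tau_pow k la w.
Proof.
rewrite /tau_pow /tau_iter iterSr; split; apply: tau_iter_sub => v.
- by move=> [_ [-> [v1 [v2 [-> [/= -> ->]]]]]].
- by move=> ->; exists [:: lc]; split=> //; exists [:: la], [::].
Qed.

Lemma tau_pow_exists k x : exists w, tau_pow k x w.
Proof.
elim: k x => [|k IH] x; first by exists [:: x].
have [wa Ha] := IH la; have [wb Hb] := IH lb; have [wc Hc] := IH lc.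
case: x.
- by exists (wa ++ wb); apply: (tau_pow_cat_sub (y := la) (z := lb)); [left | exists wa, wb].
- by exists (wa ++ wc); apply: (tau_pow_cat_sub (y := la) (z := lc)); [left | exists wa, wc].
- by exists wa; apply/tau_powSc.
Qed.

Lemma tau_pow_a_head_a k : exists v, tau_pow k la (la :: v).
Proof.
elim: k => [|k [v Hv]]; first by exists [::].
have [wb Hb] := tau_pow_exists k lb.
by exists (v ++ wb); apply: (tau_pow_cat_sub (y := la) (z := lb)); [left | exists (la :: v), wb].
Qed.

Lemma tau_pow_a_head_b k : exists v, tau_pow k.+1 la (lb :: v).
Proof.
elim: k => [|k [v Hv]].
  by exists [:: la]; apply: (tau_pow_cat_sub (y := lb) (z := la)); [right | exists [:: lb], [:: la]].
have [wb Hb] := tau_pow_exists k.+1 lb.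
by exists (v ++ wb); apply: (tau_pow_cat_sub (y := la) (z := lb)); [left | exists (lb :: v), wb].
Qed.

Definition mixed_heads (A : wset) :=
  (exists v, A (la :: v)) /\ (exists l v, l <> la /\ A (l :: v)).

Lemma mixed_heads_a k : mixed_heads (tau_pow k.+1 la).
Proof.
split; first exact: tau_pow_a_head_a.
by have [v Hv] := tau_pow_a_head_b k; exists lb, v.
Qed.

Lemma mixed_heads_b k : mixed_heads (tau_pow k.+1 lb).
Proof.
have [v Hv] := tau_pow_a_head_a k; have [wc Hc] := tau_pow_exists k lc.
split.
  by exists (v ++ wc); apply: (tau_pow_cat_sub (y := la) (z := lc)); [left | exists (la :: v), wc].
case: k wc Hc {v Hv} => [|k] wc Hc.
  exists lc, [:: la]; split=> //.
  by apply: (tau_pow_cat_sub (y := lc) (z := la)); [right | exists [:: lc], [:: la]].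
have [v Hv] := tau_pow_a_head_b k.
exists lb, (v ++ wc); split=> //.
by apply: (tau_pow_cat_sub (y := la) (z := lc)); [left | exists (lb :: v), wc].
Qed.

Lemma mixed_heads_c k : mixed_heads (tau_pow k.+2 lc).
Proof.
have [[v Ha] [l [v' [Hl Hl']]]] := mixed_heads_a k.
by split; [exists v | exists l, v'; split=> //]; apply/tau_powSc.
Qed.

Definition good_tail (r : word) :=
  (exists s t, S_tau s /\ r = s ++ t) \/ (exists l, r = [:: l]).

Definition extends (A : wset) (u : word) := exists r, good_tail r /\ A (u ++ r).

Lemma extends_sub (A B : wset) u :
  (forall w, A w -> B w) -> extends A u -> extends B u.
Proof. by move=> sAB [r [Hr Hu]]; exists r; split=> //; apply: sAB. Qed.

Lemma extends_catl (A B : wset) x u : A x -> extends B u -> extends (cat_set A B) (x ++ u).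
Proof. by move=> Hx [r [Hr Hu]]; exists r; split=> //; exists x, (u ++ r); rewrite catA. Qed.

Lemma extends_catr_S_prefix (A F : wset) u : extends A u -> mixed_heads F ->
  exists s, S_tau s /\ exists w, cat_set A F w /\ is_prefix (u ++ s) w.
Proof.
move=> [r [Hr Hu]] [[va Fa] [l' [vb [Hl' Fb]]]].
have [y [Fy [s [t [Hs Hry]]]]] : exists y, F y /\ exists s t, S_tau s /\ r ++ y = s ++ t.
  case: Hr => [[s [t [Hs ->]]] | [[] ->]].
  - by exists (la :: va); split=> //; exists s, (t ++ la :: va); rewrite catA.
  - exists (l' :: vb); split=> //; exists [:: la; l'], vb; split=> //.
    by case: l' Hl' {Fb} => // _; rewrite /S_tau; tauto.
  - by exists (la :: va); split=> //; exists [:: lb; la], va; split=> //; rewrite /S_tau; tauto.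
  - by exists (la :: va); split=> //; exists [:: lc; la], va; split=> //; rewrite /S_tau; tauto.
exists s; split=> //; exists (u ++ r ++ y); split; first by exists (u ++ r), y; rewrite catA.
by exists t; rewrite Hry catA.
Qed.

Lemma extends_catr (A F : wset) u : extends A u -> mixed_heads F -> extends (cat_set A F) u.
Proof.
move=> Hu HF; have [s [Hs [w [Hw [t Ew]]]]] := extends_catr_S_prefix Hu HF.
by exists (s ++ t); split; [left; exists s, t | rewrite catA -Ew].
Qed.

Lemma extends_nil_or_a (A : wset) l v : l <> la -> good_tail (l :: v) ->
  A [:: la, l & v] -> forall u, u = [::] \/ u = [:: la] -> extends A u.
Proof.
move=> Hl Hr HA u [->|->]; last by exists (l :: v).
exists [:: la, l & v]; split=> //; left; exists [:: la; l], v; split=> //.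
by case: l Hl {Hr HA} => // _; rewrite /S_tau; tauto.
Qed.

Lemma zeck_prod2 eps u : zeck_prod eps 2 u -> u = [::] \/ u = [:: la].
Proof.
move=> [x [_ [-> [Hx ->]]]]; rewrite cats0.
case: (eps 2) Hx => [[y [_ [-> [Hy ->]]]] | ->]; last by left.
by right; move/tau_powSc: Hy => ->.
Qed.

Lemma zeck_prodSSE eps k :
  zeck_prod eps k.+2 = cat_set (pow_set (tau_pow k.+1 lc) (eps k.+2)) (zeck_prod eps k.+1).
Proof. by []. Qed.

Lemma zeck_prodSS eps k u : zeck_prod eps k.+2 u ->
  if eps k.+2 then cat_set (tau_pow k la) (zeck_prod eps k.+1) u
  else zeck_prod eps k.+1 u.
Proof.
move=> [x [u' [-> [Hx Hu']]]].
case: (eps k.+2) Hx => [[y [_ [-> [Hy ->]]]] | ->] //.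
by exists y, u'; rewrite cats0; split=> //; split=> //; apply/tau_powSc.
Qed.

Lemma eq_zeck_prod e1 e2 k :
  (forall i, i <= k -> e1 i = e2 i) -> zeck_prod e1 k = zeck_prod e2 k.
Proof.
elim: k => [|k IH] Heq //; case: k IH Heq => [|k] IH Heq //.
by rewrite !zeck_prodSSE Heq // IH // => i Hi; apply/Heq/leqW.
Qed.

Section ZeckendorfExtension.

Variable eps : nat -> bool.
Hypothesis eps_no111 : forall i, 2 <= i -> ~~ [&& eps i, eps i.+1 & eps i.+2].

Definition zeck_extends_a k :=
  forall u, zeck_prod eps k.+1 u -> extends (tau_pow k la) u.

Definition zeck_extends_b k :=
  eps k.+2 -> forall u, zeck_prod eps k.+1 u -> extends (tau_pow k lb) u.

Lemma zeck_extends_a0 : zeck_extends_a 0.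
Proof. by move=> _ ->; exists [:: la]; split=> //; right; exists la. Qed.

Lemma zeck_extends_b0 : zeck_extends_b 0.
Proof. by move=> _ _ ->; exists [:: lb]; split=> //; right; exists lb. Qed.

Lemma zeck_extends_a1 : zeck_extends_a 1.
Proof.
move=> u /zeck_prod2; apply: (extends_nil_or_a (l := lb) (v := [::])) => //.
  by right; exists lb.
by apply: (tau_pow_cat_sub (y := la) (z := lb)); [left | exists [:: la], [:: lb]].
Qed.

Lemma zeck_extends_b1 : zeck_extends_b 1.
Proof.
move=> _ u /zeck_prod2; apply: (extends_nil_or_a (l := lc) (v := [::])) => //.
  by right; exists lc.
by apply: (tau_pow_cat_sub (y := la) (z := lc)); [left | exists [:: la], [:: lc]].
Qed.

Lemma zeck_extends_aSS k :
  zeck_extends_a k.+1 -> zeck_extends_b k.+1 -> zeck_extends_a k.+2.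
Proof.
move=> ext_a ext_b u /zeck_prodSS.
have sub_a := tau_pow_cat_sub (k := k.+1) (x := la) (y := la) (z := lb) (or_introl erefl).
case: ifP => [Ek [x [u' [-> [Hx Hu']]]] | _ Hu]; apply: extends_sub sub_a _.
  by apply: extends_catl Hx (ext_b Ek _ Hu').
exact: extends_catr (ext_a _ Hu) (mixed_heads_b k).
Qed.

Lemma zeck_extends_bSS k :
  zeck_extends_a k -> zeck_extends_a k.+1 -> zeck_extends_b k.+2.
Proof.
move=> ext_a ext_a' Ek4 u /zeck_prodSS.
have sub_b := tau_pow_cat_sub (k := k.+1) (x := lb) (y := la) (z := lc) (or_introl erefl).
case: ifP => [Ek3 [x [u' [-> [Hx Hu']]]] | _ Hu]; apply: extends_sub sub_b _.
  have Ek2 : eps k.+2 = false.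
    by apply: negbTE; apply: contra (eps_no111 (isT : 1 < k.+2)) => ->; rewrite Ek3 Ek4.
  move/zeck_prodSS: Hu'; rewrite Ek2 => /ext_a Hu'.
  by apply: extends_catl Hx _; apply: extends_sub Hu' => w /tau_powSc.
case: k ext_a ext_a' Hu {Ek4} => [|k] _ ext_a' Hu; last first.
  exact: extends_catr (ext_a' _ Hu) (mixed_heads_c k).
(* tau^1(c) = {a} has a single head, so the word aba of tau^1(a) tau^1(c) is used directly. *)
apply: (extends_nil_or_a (l := lb) (v := [:: la])) (zeck_prod2 Hu) => //.
  by left; exists [:: lb; la], [::]; split=> //; right; left.
exists [:: la; lb], [:: la]; split=> //; split; last exact/tau_powSc.
by apply: (tau_pow_cat_sub (y := la) (z := lb)); [left | exists [:: la], [:: lb]].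
Qed.

Lemma zeck_extends k : zeck_extends_a k /\ zeck_extends_b k.
Proof.
suff [] : (zeck_extends_a k /\ zeck_extends_b k) /\
          (zeck_extends_a k.+1 /\ zeck_extends_b k.+1) by [].
elim: k => [|k [[ext_a _] [ext_a' ext_b']]].
  split; split; [exact: zeck_extends_a0 | exact: zeck_extends_b0
                | exact: zeck_extends_a1 | exact: zeck_extends_b1].
split=> //; split; [exact: zeck_extends_aSS | exact: zeck_extends_bSS].
Qed.

End ZeckendorfExtension.

Theorem mainTheorem6 (p n : nat) (eps : nat -> bool) :
  2 <= p -> 1 <= n -> is_trib_zeck n p eps ->
  forall u : word, zeck_prod eps p u ->
  exists s : word, S_tau s /\
    exists w : word, tau_pow p la w /\ is_prefix (u ++ s) w.
Proof.
case: p => [|[|q]] // _ _ [_ [no111 _]] u Hu.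
(* zeck_prod reads eps only up to q.+2, so eps may be cut off there. *)
pose eps' i := (i <= q.+2) && eps i.
have eps'_no111 i : 2 <= i -> ~~ [&& eps' i, eps' i.+1 & eps' i.+2].
  rewrite /eps'; case: (leqP i.+2 q.+2) => [Hi i2 | _ _]; last by rewrite andFb !andbF.
  by rewrite (ltnW Hi) (ltnW (ltnW Hi)); apply: no111.
have Hu' : zeck_prod eps' q.+2 u.
  by rewrite (@eq_zeck_prod eps' eps) // => i Hi; rewrite /eps' Hi.
have [ext_a _] := zeck_extends eps'_no111 q.+1.
have [s [Hs [w [Hw Hpre]]]] := extends_catr_S_prefix (ext_a u Hu') (mixed_heads_b q).
exists s; split=> //; exists w; split=> //.
by apply: (tau_pow_cat_sub (y := la) (z := lb)) Hw; left.
Qed.
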